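(* In the univariate contact-tracing model (described in the context), if $\alpha>\beta>0$, then for every $T\in\mathbb{N}$, every probability distribution $D$ on $\{0,1,2,\dots\}$ and every $p_T\in(0,1]$, the policy that at every step queries a node of largest recency present in the frontier is optimal.
   Context: Univariate model. Fix $T\in\mathbb{N}$, a probability distribution $D$ on $\{0,1,2,\dots\}$, constants $p_T\in(0,1]$, $\alpha\ge 0$, and a discount parameter $\beta>0$. Every node has a recency $h\in\{0,1,\dots,T\}$. Each node (index case or child of an infected node) of recency $h$ is infected independently with probability $p(h)=p_T e^{-\alpha(T-h)}$. If a node of recency $h$ is infected, then for each $j\in\{0,\dots,h-1\}$ it has $Z_j\sim D$ children of recency $j$, all counts independent across $j$ and across nodes and independent of infection statuses. Contact tracing: at step $t=0$ the frontier is a given finite multiset of index cases with known recencies. At each step $t=0,1,2,\dots$ while the frontier is nonempty, the tracer selects one frontier node and queries it, removing it from the frontier. The query reveals its infection status; if it is infected and has recency $h$, benefit $e^{-\beta(h+t)}$ is collected and its children (with their recencies) are added to the frontier; otherwise benefit $0$ is collected and nothing is added. Nodes of the same recency are indistinguishable before being queried, so a policy is a (possibly history-dependent) rule choosing at each step which recency present in the frontier to query. A policy is optimal if for every initial frontier it maximizes the expected total collected benefit over all policies. *)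

From HB Require Import structures.
From mathcomp Require Import all_boot all_order all_algebra.
From mathcomp Require Import all_classical all_reals all_analysis.
Set Implicit Arguments. Unset Strict Implicit. Unset Printing Implicit Defensive.
Import Order.TTheory GRing.Theory Num.Theory.
Local Open Scope ring_scope.
Local Open Scope ereal_scope.

(* An observation produced by one query: (queried recency h, infection status,
   children counts zs) where nth 0 zs j = Z_j = number of children of recency j
   (zs has length h if infected, [::] otherwise). *)
Definition obs := (nat * bool * seq nat)%type.
Definition history := seq obs.
(* A frontier is a finite multiset of recencies, represented by a list. *)
Definition frontier := seq nat.
Definition policy := history -> frontier -> nat.

Definition admissible (pol : policy) : Prop :=
  forall (hist : history) (F : frontier), F != [::] -> pol hist F \in F.

Definition children (zs : seq nat) : frontier :=
  flatten [seq nseq (nth 0%N zs j) j | j <- iota 0 (size zs)].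

(* Expectation of g (Z_0, ..., Z_{k-1}) (appended to acc) where the Z_j are
   i.i.d. with law D on nat; nonnegative series in the extended reals. *)
Fixpoint Echildren (R : realType) (D : nat -> R) (k : nat) (acc : seq nat)
  (g : seq nat -> \bar R) : \bar R :=
  match k with
  | 0 => g acc
  | k'.+1 => \sum_(z <oo) ((D z)%:E * Echildren D k' (rcons acc z) g)
  end.

Definition infect_prob (R : realType) (T : nat) (pT alpha : R) (h : nat) : R :=
  (pT * expR (- alpha * (T%:R - h%:R)))%R.

Fixpoint Vn (R : realType) (T : nat) (D : nat -> R) (pT alpha beta : R)
  (pol : policy) (n : nat) (hist : history) (F : frontier) : \bar R :=
  match n with
  | 0 => 0
  | n'.+1 =>
    if F is [::] then 0 else
    let h := pol hist F in
    let t := size hist in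
    let p := infect_prob T pT alpha h in
    let F' := rem h F in
    ((1 - p)%R)%:E * Vn T D pT alpha beta pol n' (rcons hist (h, false, [::])) F'
    + p%:E * ((expR (- beta * (h%:R + t%:R)))%:E
              + Echildren D h [::] (fun zs =>
                  Vn T D pT alpha beta pol n' (rcons hist (h, true, zs))
                     (F' ++ children zs)))
  end.

(* Expected total collected benefit from initial frontier F0 (step t = 0):
   the supremum (= monotone limit) of the n-step expected benefits. *)
Definition value (R : realType) (T : nat) (D : nat -> R) (pT alpha beta : R)
  (pol : policy) (F0 : frontier) : \bar R :=
  ereal_sup (range (fun n => Vn T D pT alpha beta pol n [::] F0)).

Definition optimal (R : realType) (T : nat) (D : nat -> R) (pT alpha beta : R)
  (pol : policy) : Prop :=
  admissible pol /\
  forall (pol' : policy), admissible pol' ->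
  forall F0 : frontier, all (fun h => (h <= T)%N) F0 ->
    value T D pT alpha beta pol' F0 <= value T D pT alpha beta pol F0.

Definition greedy_policy : policy := fun _ F => (\max_(h <- F) h)%N.

From HB Require Import structures.
From mathcomp Require Import all_boot all_order all_algebra.
From mathcomp Require Import all_classical all_reals all_analysis.
From mathcomp Require Import ring lra.
Import Order.TTheory GRing.Theory Num.Theory.
Local Open Scope ring_scope.
Set Implicit Arguments. Unset Strict Implicit. Unset Printing Implicit Defensive.

(* Since the benefit of a query at step t carries the factor e^{-beta t}, the
   n-step value of a policy from step t is e^{-beta t} times a time-independent
   quantity; let G_n(F) be this quantity for the greedy policy.  The key fact is
   that querying any h in F and then acting greedily for n steps earns at most
   G_{n+1}(F).  If m = max F differs from h, the greedy continuation queries m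
   right after h, because the children of h have smaller recency than h.
   Exchanging these two queries leaves the law of the resulting frontier
   unchanged, the two outcomes being independent, and replaces the discounted
   immediate rewards r(h) + e^{-beta} r(m) by r(m) + e^{-beta} r(h), where
   r(h) = p(h) e^{-beta h} = p_T e^{-alpha T} e^{(alpha - beta) h} increases
   with h precisely because alpha > beta.  Induction on n then bounds the n-step
   value of every policy by that of the greedy one. *)

Lemma remC (T : eqType) (x y : T) (s : seq T) : rem x (rem y s) = rem y (rem x s).
Proof.
elim: s => //= z s IH.
have [<-|zy] := eqVneq z y; have [<-|zx] := eqVneq z x => /=;
  by rewrite ?eqxx ?(negPf zx) ?(negPf zy) ?IH.
Qed.

Lemma rem_cat (T : eqType) (x : T) (s1 s2 : seq T) :
  x \in s1 -> rem x (s1 ++ s2) = rem x s1 ++ s2.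
Proof.
by elim: s1 => //= y s IH; rewrite inE; case: eqVneq => //= _ /IH ->.
Qed.

Lemma perm_rem (T : eqType) (x : T) (s1 s2 : seq T) :
  perm_eq s1 s2 -> perm_eq (rem x s1) (rem x s2).
Proof.
move=> eq12; have [xs1|xs1] := boolP (x \in s1); last first.
  by rewrite !rem_id // -(perm_mem eq12).
have xs2 : x \in s2 by rewrite -(perm_mem eq12).
by rewrite -(perm_cons x) -(permPl (perm_to_rem xs1)) -(permPr (perm_to_rem xs2)).
Qed.

Lemma mem_bigmax_seq (s : seq nat) : s != [::] -> (\max_(x <- s) x)%N \in s.
Proof.
elim: s => // x s IH _; rewrite big_cons inE.
have [->|/IH] := eqVneq s [::]; first by rewrite big_nil maxn0 eqxx.
by case: leqP => _ Ms; rewrite ?Ms ?orbT ?eqxx.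
Qed.

Lemma bigmax_seq_eq (s : seq nat) m :
  m \in s -> {in s, forall x, (x <= m)%N} -> (\max_(x <- s) x)%N = m.
Proof.
move=> ms le_m; apply/eqP; rewrite eqn_leq leq_bigmax_seq // andbT.
by apply/bigmax_leqP_seq => x xs _; apply: le_m.
Qed.

Lemma children_lt_size (zs : seq nat) x : x \in children zs -> (x < size zs)%N.
Proof. by case/flatten_mapP => j; rewrite mem_iota => /andP[_ ?] /nseqP[->]. Qed.

Section Expectation.
Variables (R : realType) (D : nat -> R).
Hypothesis D_ge0 : forall n, 0 <= D n.
Hypothesis D_sum1 : (\sum_(n <oo) (D n)%:E = 1)%E.
Local Notation E := (Echildren D).
Local Open Scope ereal_scope.

Lemma Echildren_ge0 k acc f :
  (forall zs, size zs = (size acc + k)%N -> 0 <= f zs) -> 0 <= E k acc f.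
Proof.
elim: k acc => [|k IH] acc f0 /=; first by apply: f0; rewrite addn0.
apply: nneseries_ge0 => n _ _; rewrite mule_ge0 ?lee_fin //.
by apply: IH => zs; rewrite size_rcons addSnnS; apply: f0.
Qed.

Lemma le_Echildren k acc f g :
  (forall zs, size zs = (size acc + k)%N -> 0 <= f zs) ->
  (forall zs, size zs = (size acc + k)%N -> f zs <= g zs) ->
  E k acc f <= E k acc g.
Proof.
elim: k acc => [|k IH] acc f0 fg /=; first by apply: fg; rewrite addn0.
apply: lee_nneseries => [n _ _|n _].
  rewrite mule_ge0 ?lee_fin //; apply: Echildren_ge0 => zs.
  by rewrite size_rcons addSnnS; apply: f0.
rewrite lee_wpmul2l ?lee_fin //.
by apply: IH => zs; rewrite size_rcons addSnnS; [exact: f0|exact: fg].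
Qed.

Lemma eq_Echildren k acc f g :
  (forall zs, size zs = (size acc + k)%N -> f zs = g zs) -> E k acc f = E k acc g.
Proof.
elim: k acc => [|k IH] acc fg /=; first by apply: fg; rewrite addn0.
apply: eq_eseriesr => n _; congr (_ * _); apply: IH => zs.
by rewrite size_rcons addSnnS; apply: fg.
Qed.

Lemma EchildrenZl k acc (x : R) f : (forall zs, 0 <= f zs) ->
  E k acc (fun zs => x%:E * f zs) = x%:E * E k acc f.
Proof.
move=> f0; elim: k acc => [|k IH] acc //=.
rewrite -nneseriesZl => [|n _]; last by rewrite mule_ge0 ?lee_fin ?Echildren_ge0.
by apply: eq_eseriesr => n _; rewrite IH muleCA.
Qed.

Lemma EchildrenD k acc f g : (forall zs, 0 <= f zs) -> (forall zs, 0 <= g zs) ->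
  E k acc (fun zs => f zs + g zs) = E k acc f + E k acc g.
Proof.
move=> f0 g0; elim: k acc => [|k IH] acc //=.
rewrite -nneseriesD => [|n _ _|n _ _]; try by rewrite mule_ge0 ?lee_fin ?Echildren_ge0.
by apply: eq_eseriesr => n _; rewrite IH ge0_muleDr ?Echildren_ge0.
Qed.

Lemma Echildren_cst k acc (x : R) : (0 <= x)%R -> E k acc (fun _ => x%:E) = x%:E.
Proof.
move=> x0; elim: k acc => [|k IH] acc //=.
under eq_eseriesr do rewrite IH muleC.
by rewrite nneseriesZl ?D_sum1 ?mule1 // => n _; rewrite lee_fin.
Qed.

Lemma Echildren_nneseries k acc (g : seq nat -> nat -> \bar R) :
  (forall zs i, 0 <= g zs i) ->
  E k acc (fun zs => \sum_(i <oo) g zs i) = \sum_(i <oo) E k acc (g^~ i).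
Proof.
move=> g0; elim: k acc => [|k IH] acc //=.
rewrite -nneseries_interchange => [|n i]; last by rewrite mule_ge0 ?lee_fin ?Echildren_ge0.
apply: eq_eseriesr => n _.
by rewrite IH -nneseriesZl // => i _; apply: Echildren_ge0.
Qed.

Lemma Echildren_swap k1 acc1 k2 acc2 (f : seq nat -> seq nat -> \bar R) :
  (forall a b, 0 <= f a b) ->
  E k1 acc1 (fun a => E k2 acc2 (f a)) = E k2 acc2 (fun b => E k1 acc1 (f^~ b)).
Proof.
move=> f0; elim: k2 acc2 => [|k2 IH] acc2 //=.
rewrite Echildren_nneseries => [|zs i]; last by rewrite mule_ge0 ?lee_fin ?Echildren_ge0.
by apply: eq_eseriesr => n _; rewrite EchildrenZl ?IH // => zs; apply: Echildren_ge0.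
Qed.

End Expectation.

Section Interchange.
Variables (R : realType) (D : nat -> R) (beta : R) (p : nat -> R) (T : nat).
Hypothesis D_ge0 : forall n, 0 <= D n.
Hypothesis D_sum1 : (\sum_(n <oo) (D n)%:E = 1)%E.
Hypothesis beta_ge0 : 0 <= beta.
Hypothesis p_ge0 : forall h, 0 <= p h.
Hypothesis p_le1 : forall h, p h <= 1.
Local Notation E := (Echildren D).

Lemma onem_p_ge0 h : 0 <= 1 - p h.
Proof. by rewrite subr_ge0. Qed.

Definition reward h : R := p h * expR (- beta * h%:R).

Lemma reward_ge0 h : 0 <= reward h.
Proof. by rewrite mulr_ge0 ?expR_ge0. Qed.

Local Open Scope ereal_scope.

(* The outcome of querying a node of recency [h] is recorded as its list of
   children counts, which is empty when the node is not infected. *)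
Definition Equery h (g : seq nat -> \bar R) : \bar R :=
  (1 - p h)%:E * g [::] + (p h)%:E * E h [::] g.

Lemma Equery_ge0 h g : (forall zs, 0 <= g zs) -> 0 <= Equery h g.
Proof.
move=> g0; rewrite adde_ge0 ?mule_ge0 ?lee_fin ?onem_p_ge0 //.
exact: Echildren_ge0.
Qed.

Lemma le_Equery h f g : (forall zs, 0 <= f zs) ->
  (forall zs, (size zs <= h)%N -> f zs <= g zs) -> Equery h f <= Equery h g.
Proof.
move=> f0 fg; rewrite leeD ?lee_wpmul2l ?lee_fin ?onem_p_ge0 ?fg //.
by apply: le_Echildren => // zs /= sz; apply: fg; rewrite sz.
Qed.

Lemma eq_Equery h f g :
  (forall zs, (size zs <= h)%N -> f zs = g zs) -> Equery h f = Equery h g.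
Proof.
move=> fg; rewrite /Equery fg //; congr (_ + _ * _).
by apply: eq_Echildren => zs /= sz; apply: fg; rewrite sz.
Qed.

Lemma Equery_cst h (a : R) : (0 <= a)%R -> Equery h (fun=> a%:E) = a%:E.
Proof.
by move=> a0; rewrite /Equery Echildren_cst // -!EFinM -EFinD -mulrDl subrK mul1r.
Qed.

Lemma Equery_affine h (a b : R) g : (0 <= a)%R -> (0 <= b)%R ->
  (forall zs, 0 <= g zs) ->
  Equery h (fun zs => a%:E + b%:E * g zs) = a%:E + b%:E * Equery h g.
Proof.
move=> a0 b0 g0; have q0 := onem_p_ge0 h.
have bg0 zs : 0 <= b%:E * g zs by rewrite mule_ge0 ?lee_fin.
have Eg0 : 0 <= E h [::] g by apply: Echildren_ge0.
rewrite /Equery EchildrenD // Echildren_cst // EchildrenZl //.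
rewrite !ge0_muleDr ?mule_ge0 ?lee_fin //.
rewrite addeACA -!EFinM -EFinD -mulrDl subrK mul1r.
by rewrite !muleA -!EFinM (mulrC b) (mulrC b).
Qed.

Lemma Equery_swap x y (f : seq nat -> seq nat -> \bar R) : (forall a b, 0 <= f a b) ->
  Equery x (fun a => Equery y (f a)) = Equery y (fun b => Equery x (f^~ b)).
Proof.
move=> f0.
have Ef0 k zs : 0 <= E k [::] (f zs) by apply: Echildren_ge0.
have Ef0' k zs : 0 <= E k [::] (f^~ zs) by apply: Echildren_ge0.
rewrite /Equery !EchildrenD ?EchildrenZl => // [|zs|zs|zs|zs];
  try by rewrite mule_ge0 ?lee_fin ?onem_p_ge0.
rewrite Echildren_swap //.
set a := f [::] [::]; set b := E y [::] (f [::]); set c := E x [::] (f^~ [::]).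
set d := E y [::] _.
have a0 : 0 <= a := f0 _ _.
have b0 : 0 <= b := Ef0 _ _.
have c0 : 0 <= c := Ef0' _ _.
have d0 : 0 <= d by apply: Echildren_ge0.
have qx := onem_p_ge0 x; have qy := onem_p_ge0 y.
rewrite !ge0_muleDr ?mule_ge0 ?lee_fin // !muleA -!EFinM.
by rewrite !(mulrC (1 - p y)%R) !(mulrC (p y)) addeACA.
Qed.

Definition Enext (G : frontier -> \bar R) h F : \bar R :=
  Equery h (fun zs => G (rem h F ++ children zs)).

(* Benefits are measured from the current step: a benefit collected [t] steps
   later is multiplied by [expR (- beta * t)]. *)
Definition query (G : frontier -> \bar R) h F : \bar R :=
  (reward h)%:E + (expR (- beta))%:E * Enext G h F.

Fixpoint greedy_value n F : \bar R :=
  if n is n'.+1 then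
    if F is [::] then 0 else query (greedy_value n') (\max_(h <- F) h)%N F
  else 0.

Lemma Enext_ge0 G h F : (forall S, 0 <= G S) -> 0 <= Enext G h F.
Proof. by move=> G0; apply: Equery_ge0. Qed.

Lemma query_ge0 G h F : (forall S, 0 <= G S) -> 0 <= query G h F.
Proof.
by move=> G0; rewrite adde_ge0 ?mule_ge0 ?lee_fin ?reward_ge0 ?expR_ge0 ?Enext_ge0.
Qed.

Lemma greedy_value_ge0 n F : 0 <= greedy_value n F.
Proof. by elim: n F => [|n IH] [|x s] //=; apply: query_ge0. Qed.

Lemma greedy_valueS n F : F != [::] ->
  greedy_value n.+1 F = query (greedy_value n) (\max_(h <- F) h)%N F.
Proof. by case: F. Qed.

Lemma greedy_valueE n F m : m \in F -> {in F, forall x, (x <= m)%N} ->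
  greedy_value n.+1 F = query (greedy_value n) m F.
Proof. by move=> mF le_m; rewrite greedy_valueS ?(bigmax_seq_eq mF le_m) //; case: (F) mF. Qed.

Lemma le_query G1 G2 h F : (forall S, 0 <= G1 S) ->
  (forall zs, (size zs <= h)%N ->
     G1 (rem h F ++ children zs) <= G2 (rem h F ++ children zs)) ->
  query G1 h F <= query G2 h F.
Proof. by move=> G0 le12; rewrite leeD2l ?lee_wpmul2l ?lee_fin ?expR_ge0 ?le_Equery. Qed.

Lemma eq_query G1 G2 h F :
  (forall zs, (size zs <= h)%N ->
     G1 (rem h F ++ children zs) = G2 (rem h F ++ children zs)) ->
  query G1 h F = query G2 h F.
Proof. by move=> eq12; rewrite /query /Enext (eq_Equery eq12). Qed.

Lemma perm_greedy_value n F1 F2 :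
  perm_eq F1 F2 -> greedy_value n F1 = greedy_value n F2.
Proof.
elim: n F1 F2 => [//|n IH] [|x1 s1] [|x2 s2] // F12; try by have := perm_size F12.
rewrite /= (perm_big _ F12) /query /Enext; congr (_ + _ * _).
apply: eq_Equery => zs _.
by apply: IH; rewrite perm_cat2r perm_rem.
Qed.

Lemma query_queryE G x y F : (forall S, 0 <= G S) ->
  query (query G y) x F =
  (reward x)%:E + (expR (- beta))%:E *
    ((reward y)%:E + (expR (- beta))%:E * Enext (Enext G y) x F).
Proof.
move=> G0; rewrite /query /Enext Equery_affine ?reward_ge0 ?expR_ge0 //.
by move=> zs; apply: Equery_ge0.
Qed.

Lemma Enext_Enext G x y F : y \in rem x F ->
  Enext (Enext G y) x F =
  Equery x (fun a => Equery y (fun b => G (rem y (rem x F) ++ children a ++ children b))).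
Proof.
move=> yx; apply: eq_Equery => a _; rewrite /Enext rem_cat //.
by apply: eq_Equery => b _; rewrite catA.
Qed.

Lemma Enext_EnextC G x y F : (forall S, 0 <= G S) ->
  (forall S1 S2, perm_eq S1 S2 -> G S1 = G S2) -> x \in F -> y \in F ->
  Enext (Enext G y) x F = Enext (Enext G x) y F.
Proof.
move=> G0 G_perm xF yF; have [<-//|xy] := eqVneq x y.
rewrite !Enext_Enext ?rem_mem // 1?eq_sym // remC Equery_swap //.
apply: eq_Equery => b _; apply: eq_Equery => a _.
by apply: G_perm; rewrite perm_cat2l perm_catC.
Qed.

Lemma query_swap_le G h m F : (forall S, 0 <= G S) ->
  (forall S1 S2, perm_eq S1 S2 -> G S1 = G S2) -> h \in F -> m \in F ->
  (reward h <= reward m)%R -> query (query G m) h F <= query (query G h) m F.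
Proof.
move=> G0 G_perm hF mF le_hm; rewrite !query_queryE // (Enext_EnextC G0 G_perm hF mF).
have : 0 <= Enext (Enext G h) m F by apply: Enext_ge0 => S; apply: Enext_ge0.
move: (Enext _ m F) => N N0.
rewrite !ge0_muleDr ?mule_ge0 ?lee_fin ?reward_ge0 ?expR_ge0 // !addeA.
apply: leeD => //; rewrite -!EFinM -!EFinD lee_fin.
have c_le1 : (expR (- beta) <= 1)%R by rewrite expR_le1 oppr_le0.
have := reward_ge0 h; have := expR_ge0 (- beta); nra.
Qed.

Lemma discounted_queryE G h F t : (forall S, 0 <= G S) ->
  (expR (- beta * t%:R))%:E * query G h F =
  (1 - p h)%:E * ((expR (- beta * t.+1%:R))%:E * G (rem h F)) +
  (p h)%:E * ((expR (- beta * (h%:R + t%:R)))%:E +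
     E h [::] (fun zs => (expR (- beta * t.+1%:R))%:E * G (rem h F ++ children zs))).
Proof.
move=> G0; rewrite /query /Enext /Equery cats0 EchildrenZl //.
have -> : expR (- beta * t.+1%:R) = (expR (- beta * t%:R) * expR (- beta))%R.
  by rewrite -expRD -natr1 mulrDr mulr1.
have -> : expR (- beta * (h%:R + t%:R)) = (expR (- beta * t%:R) * expR (- beta * h%:R))%R.
  by rewrite -expRD -mulrDr addrC.
have a0 := G0 (rem h F).
have b0 : 0 <= E h [::] (fun zs => G (rem h F ++ children zs)) by apply: Echildren_ge0.
move: (G (rem h F)) (E h _ _) a0 b0 => a b a0 b0.
rewrite /reward (EFinM (p h)) !ge0_muleDr ?adde_ge0 ?mule_ge0 ?lee_fin ?onem_p_ge0 ?expR_ge0 //.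
by rewrite !muleA -!EFinM addeCA; congr (_%:E * _ + (_%:E + _%:E * _)); ring.
Qed.

Hypothesis reward_le : forall h m, (h <= m <= T)%N -> (reward h <= reward m)%R.

Definition bounded (F : frontier) := all (fun h => (h <= T)%N) F.

Lemma bounded_rem h F : bounded F -> bounded (rem h F).
Proof. by move=> /allP bF; apply/allP => x /mem_rem /bF. Qed.

Lemma bounded_cat_children S zs :
  bounded S -> (size zs <= T)%N -> bounded (S ++ children zs).
Proof.
move=> bS zsT; rewrite /bounded all_cat; apply/andP; split=> //.
by apply/allP => x /children_lt_size /ltnW /leq_trans; apply.
Qed.

Lemma query_greedy_value0 h F : query (greedy_value 0) h F = (reward h)%:E.
Proof. by rewrite /query /Enext Equery_cst // mule0 adde0. Qed.

Lemma greedy_value_after_query n F h m : h \in F -> m \in F ->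
  {in F, forall x, (x <= m)%N} -> h != m ->
  query (greedy_value n.+1) h F = query (query (greedy_value n) m) h F.
Proof.
move=> hF mF le_m hm; have mrh : m \in rem h F by rewrite rem_mem // eq_sym.
apply: eq_query => zs sz; apply: greedy_valueE; first by rewrite mem_cat mrh.
move=> x; rewrite mem_cat => /orP[/mem_rem/le_m //|/children_lt_size lt_x].
by rewrite ltnW // (leq_trans lt_x) // (leq_trans sz) ?le_m.
Qed.

Lemma query_le_greedy_value n F h : bounded F -> h \in F ->
  query (greedy_value n) h F <= greedy_value n.+1 F.
Proof.
elim: n F h => [|n IH] F h bF hF; set m := (\max_(x <- F) x)%N;
  have mF : m \in F by apply: mem_bigmax_seq; case: (F) hF.
all: have le_m : {in F, forall x, (x <= m)%N} by move=> x xF; apply: leq_bigmax_seq.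
all: have mT := allP bF m mF; rewrite (greedy_valueE _ mF le_m).
  by rewrite !query_greedy_value0 lee_fin reward_le // le_m.
have [->//|hm] := eqVneq h m; rewrite (greedy_value_after_query _ hF mF le_m hm).
apply: le_trans (query_swap_le _ _ hF mF _) _.
- exact: greedy_value_ge0.
- exact: perm_greedy_value.
- by rewrite reward_le // le_m.
apply: le_query => [S|zs sz]; first by apply: query_ge0 => S'; apply: greedy_value_ge0.
apply: IH; last by rewrite mem_cat rem_mem.
apply: bounded_cat_children; first exact: bounded_rem.
by rewrite (leq_trans sz) // (leq_trans _ mT) ?le_m.
Qed.

End Interchange.

Section ContactTracing.
Variables (R : realType) (D : nat -> R) (T : nat) (pT alpha beta : R).
Hypothesis D_ge0 : forall n, 0 <= D n.
Hypothesis D_sum1 : (\sum_(n <oo) (D n)%:E = 1)%E.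
Hypothesis beta_gt0 : 0 < beta.
Hypothesis beta_lt_alpha : beta < alpha.
Hypothesis pT01 : 0 < pT <= 1.

(* [infect_prob] exceeds 1 beyond recency [T]; zeroing it there yields a
   probability at every recency and changes nothing on frontiers bounded by [T]. *)
Definition pinf h : R := if (h <= T)%N then infect_prob T pT alpha h else 0.

Lemma infect_probE h : (h <= T)%N -> infect_prob T pT alpha h = pinf h.
Proof. by rewrite /pinf => ->. Qed.

Lemma pinf_ge0 h : 0 <= pinf h.
Proof.
rewrite /pinf; case: ifP => // _; case/andP: pT01 => /ltW pT0 _.
by rewrite mulr_ge0 ?expR_ge0.
Qed.

Lemma pinf_le1 h : pinf h <= 1.
Proof.
rewrite /pinf; case: ifP => // hT; case/andP: pT01 => pT0 pT1.
have alpha_ge0 : 0 <= alpha by apply/ltW/(lt_trans beta_gt0).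
rewrite /infect_prob (le_trans _ pT1) // ler_piMr ?(ltW pT0) // expR_le1 mulNr oppr_le0.
by rewrite mulr_ge0 ?subr_ge0 ?ler_nat.
Qed.

Lemma reward_pinf_le h m : (h <= m <= T)%N -> reward beta pinf h <= reward beta pinf m.
Proof.
case/andP=> hm mT; rewrite /reward /pinf mT (leq_trans hm mT) /infect_prob.
have pT0 : 0 <= pT by case/andP: pT01 => /ltW.
rewrite -!mulrA -!expRD ler_wpM2l // ler_expR.
have : (h%:R <= m%:R :> R) by rewrite ler_nat.
have := beta_lt_alpha; nra.
Qed.

Local Open Scope ereal_scope.

Local Notation V pol := (Vn T D pT alpha beta pol).
Local Notation G := (greedy_value D beta pinf).

Let onem_pinf_ge0 := onem_p_ge0 pinf_le1.
Let G_ge0 := greedy_value_ge0 beta D_ge0 pinf_ge0 pinf_le1.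
Let query_le_G :=
  query_le_greedy_value D_ge0 D_sum1 (ltW beta_gt0) pinf_ge0 pinf_le1 reward_pinf_le.

Lemma VnS pol n hist F h : F != [::] -> pol hist F = h ->
  V pol n.+1 hist F =
  (1 - infect_prob T pT alpha h)%:E * V pol n (rcons hist (h, false, [::])) (rem h F) +
  (infect_prob T pT alpha h)%:E *
    ((expR (- beta * (h%:R + (size hist)%:R)))%:E +
     Echildren D h [::] (fun zs =>
       V pol n (rcons hist (h, true, zs)) (rem h F ++ children zs))).
Proof. by case: F => // x s _ <-. Qed.

Lemma Vn_ge0 pol n hist F : admissible pol -> bounded T F -> 0 <= V pol n hist F.
Proof.
move=> adm; elim: n hist F => [//|n IH] hist F bF.
have [->//|F0] := eqVneq F [::].
have hF := adm hist F F0; rewrite (VnS _ F0 erefl) infect_probE ?(allP bF _ hF) //.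
rewrite adde_ge0 ?mule_ge0 ?adde_ge0 ?lee_fin ?pinf_ge0 ?onem_pinf_ge0 ?expR_ge0
  ?IH ?bounded_rem //.
apply: (Echildren_ge0 D_ge0) => zs sz; apply: IH.
by rewrite bounded_cat_children ?bounded_rem //= sz (allP bF _ hF).
Qed.

Lemma Vn_le_greedy_value pol n hist F : admissible pol -> bounded T F ->
  V pol n hist F <= (expR (- beta * (size hist)%:R))%:E * G n F.
Proof.
move=> adm; elim: n hist F => [|n IH] hist F bF; first by rewrite mule0.
have [->|F0] := eqVneq F [::]; first by rewrite mule0.
set h := pol hist F; have hF : h \in F := adm hist F F0.
have hT := allP bF h hF; have bFh := bounded_rem h bF.
rewrite (VnS _ F0 erefl) infect_probE //.
apply: (@le_trans _ _ ((expR (- beta * (size hist)%:R))%:E * query D beta pinf (G n) h F)).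
  rewrite (discounted_queryE _ D_ge0 pinf_ge0 pinf_le1 _ _ _ (G_ge0 n)).
  rewrite leeD ?lee_wpmul2l ?lee_fin ?pinf_ge0 ?onem_pinf_ge0 //.
    by move: (IH (rcons hist (h, false, [::])) _ bFh); rewrite size_rcons.
  rewrite leeD2l //; apply: le_Echildren => // zs /= sz.
    by rewrite Vn_ge0 // bounded_cat_children // sz.
  have bS : bounded T (rem h F ++ children zs) by rewrite bounded_cat_children // sz.
  by move: (IH (rcons hist (h, true, zs)) _ bS); rewrite size_rcons.
by rewrite lee_wpmul2l ?lee_fin ?expR_ge0 ?query_le_G.
Qed.

Lemma Vn_greedy_policy n hist F : bounded T F ->
  V greedy_policy n hist F = (expR (- beta * (size hist)%:R))%:E * G n F.
Proof.
elim: n hist F => [|n IH] hist F bF; first by rewrite mule0.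
have [->|F0] := eqVneq F [::]; first by rewrite mule0.
set m := greedy_policy hist F; have mF : m \in F by apply: mem_bigmax_seq.
have mT := allP bF m mF; have bFm := bounded_rem m bF.
rewrite (VnS _ F0 erefl) infect_probE // greedy_valueS //.
rewrite (discounted_queryE _ D_ge0 pinf_ge0 pinf_le1 _ _ _ (G_ge0 n)) IH ?size_rcons //.
congr (_ + _ * (_ + _)); apply: eq_Echildren => zs /= sz.
by rewrite IH ?size_rcons ?bounded_cat_children ?sz.
Qed.

End ContactTracing.

Theorem theorem6p5 (R : realType) (alpha beta : R) :
  0 < beta -> beta < alpha ->
  forall (T : nat) (D : nat -> R) (pT : R),
    (forall n, 0 <= D n) ->
    (\sum_(n <oo) (D n)%:E = 1)%E ->
    0 < pT <= 1 ->
    optimal T D pT alpha beta greedy_policy.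
Proof.
move=> beta_gt0 beta_lt_alpha T D pT D_ge0 D_sum1 pT01.
split=> [hist F F0|pol adm F bF]; first exact: mem_bigmax_seq.
apply: ge_ereal_sup => _ [n _ <-].
have greedyE := Vn_greedy_policy D_ge0 beta_gt0 beta_lt_alpha pT01 n [::] bF.
apply: le_trans (Vn_le_greedy_value D_ge0 D_sum1 beta_gt0 beta_lt_alpha pT01 n [::] adm bF) _.
by rewrite -greedyE; apply: ereal_sup_ubound; exists n.
Qed.
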